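(* Let $I_S>0$ and define the monopoly SP's net revenue as a function of the small-cell deployment density $\lambda\ge 0$ by $$S(\lambda)=\begin{cases}(BR_0)^{1-\alpha}(N_m+N_f)^{\alpha}-I_S\lambda, & 0\le\lambda\le 1,\\ (BR_0)^{1-\alpha}\big(N_m+\lambda^{\frac1\alpha-1}N_f\big)^{\alpha}-I_S\lambda, & \lambda>1.\end{cases}$$ Then every maximizer $\lambda^{\mathrm{rev}}$ of $S$ over $[0,\infty)$ satisfies either $\lambda^{\mathrm{rev}}=0$ or $\lambda^{\mathrm{rev}}=\lambda^*$, where $\lambda^*>1$ solves $$N_f(1-\alpha)(BR_0)^{1-\alpha}(\lambda^* )^{\frac1\alpha-2}\big(N_f(\lambda^* )^{\frac1\alpha-1}+N_m\big)^{\alpha-1}=I_S. \qquad (P1)$$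
   Context: Parameters: $\alpha\in(0,1)$; densities $N_m>0$ of mobile users and $N_f>0$ of fixed users; spectral efficiency $R_0>0$; SP bandwidth $B>0$; investment cost $I_S>0$ per unit small-cell density (the SP pays $I_S\lambda$ to deploy density $\lambda$). Users have utility $u(r)=\frac{r^{1-\alpha}}{1-\alpha}$. The function $S(\lambda)$ is the SP's revenue minus investment cost when, for a given density $\lambda$, it uses its revenue-optimal bandwidth split and market-clearing prices: for $\lambda\le 1$ all bandwidth goes to macro-cells; for $\lambda>1$ it allocates $B_S=\frac{\epsilon N_fB}{\epsilon N_f+N_m}$, $B_M=\frac{N_mB}{\epsilon N_f+N_m}$ with $\epsilon=\lambda^{1/\alpha-1}$. *)

From Stdlib Require Import Reals.
Open Scope R_scope.

Definition S_rev (alpha Nm Nf R0 B IS lam : R) : R :=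
  if Rle_dec lam 1 then
    Rpower (B * R0) (1 - alpha) * Rpower (Nm + Nf) alpha - IS * lam
  else
    Rpower (B * R0) (1 - alpha)
      * Rpower (Nm + Rpower lam (1 / alpha - 1) * Nf) alpha - IS * lam.

Definition P1 (alpha Nm Nf R0 B IS lam : R) : Prop :=
  Nf * (1 - alpha) * Rpower (B * R0) (1 - alpha) * Rpower lam (1 / alpha - 2)
    * Rpower (Nf * Rpower lam (1 / alpha - 1) + Nm) (alpha - 1) = IS.

Definition is_maximizer (f : R -> R) (lam : R) : Prop :=
  0 <= lam /\ forall x, 0 <= x -> f x <= f lam.

(* Net revenue is strictly decreasing on [0, 1], since the SP then serves everybody from
   the macro-cells whatever the density, so a positive maximizer lies in (1, +oo).  There
   S is a differentiable function of lambda and the maximizer is interior, so S'(lambda) = 0;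
   writing e = 1/alpha - 1 and using alpha * e = 1 - alpha, this is exactly (P1). *)

From Stdlib Require Import Reals Lra.
Open Scope R_scope.

Lemma Rpower_pos (x y : R) : 0 < Rpower x y.
Proof. unfold Rpower; apply exp_pos. Qed.

Lemma derivable_pt_lim_local_max (f : R -> R) (a b x l : R) :
  a < x < b -> (forall y, a < y < b -> f y <= f x) ->
  derivable_pt_lim f x l -> l = 0.
Proof.
  intros [Hax Hxb] Hmax Hf.
  change l with (derive_pt f x (exist _ l Hf)).
  apply (deriv_maximum f a b); auto.
Qed.

Section Revenue.

Variables alpha Nm Nf R0 B IS : R.

Definition revenue_hi (x : R) : R :=
  Rpower (B * R0) (1 - alpha)
    * Rpower (Nm + Rpower x (1 / alpha - 1) * Nf) alpha - IS * x.

Definition revenue_hi_deriv (x : R) : R :=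
  let e := 1 / alpha - 1 in
  Rpower (B * R0) (1 - alpha)
    * (alpha * Rpower (Nm + Rpower x e * Nf) (alpha - 1) * (e * Rpower x (e - 1) * Nf))
    - IS.

Lemma S_rev_gt1 (x : R) : 1 < x -> S_rev alpha Nm Nf R0 B IS x = revenue_hi x.
Proof. intros Hx; unfold S_rev; destruct (Rle_dec x 1); [lra | reflexivity]. Qed.

Hypothesis HIS : 0 < IS.

Lemma S_rev_lt_S_rev0 (x : R) :
  0 < x <= 1 -> S_rev alpha Nm Nf R0 B IS x < S_rev alpha Nm Nf R0 B IS 0.
Proof.
  intros [Hx0 Hx1]; unfold S_rev.
  destruct (Rle_dec x 1); [|lra]; destruct (Rle_dec 0 1); [|lra].
  assert (0 < IS * x) by (apply Rmult_lt_0_compat; lra); lra.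
Qed.

Hypotheses (HNm : 0 < Nm) (HNf : 0 <= Nf).

Lemma derivable_pt_lim_revenue_hi (x : R) :
  0 < x -> derivable_pt_lim revenue_hi x (revenue_hi_deriv x).
Proof.
  intros Hx.
  set (e := 1 / alpha - 1); set (C := Rpower (B * R0) (1 - alpha)).
  set (h := fun y => Nm + Rpower y e * Nf).
  assert (Hh : derivable_pt_lim h x (e * Rpower x (e - 1) * Nf)).
  { assert (Hpow := derivable_pt_lim_power x e Hx).
    assert (Hscaled := derivable_pt_lim_scal _ Nf _ _ Hpow).
    assert (Hsum := derivable_pt_lim_plus _ _ x _ _ (derivable_pt_lim_const Nm x) Hscaled).
    replace (e * Rpower x (e - 1) * Nf) with (0 + Nf * (e * Rpower x (e - 1))) by ring.
    refine (derivable_pt_lim_ext _ _ _ _ _ Hsum).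
    intros y; unfold h, plus_fct, fct_cte, mult_real_fct; ring. }
  assert (Hhx : 0 < h x).
  { unfold h; pose proof (Rmult_le_pos _ _ (Rlt_le _ _ (Rpower_pos x e)) HNf); lra. }
  assert (Hcomp := derivable_pt_lim_comp h (fun y => Rpower y alpha) x _ _ Hh
                     (derivable_pt_lim_power _ alpha Hhx)).
  assert (HS := derivable_pt_lim_minus _ _ x _ _ (derivable_pt_lim_scal _ C _ _ Hcomp)
                  (derivable_pt_lim_scal _ IS _ _ (derivable_pt_lim_id x))).
  replace (revenue_hi_deriv x)
    with (C * (alpha * Rpower (h x) (alpha - 1) * (e * Rpower x (e - 1) * Nf)) - IS * 1)
    by (unfold revenue_hi_deriv; fold e C; unfold h; ring).
  exact HS.
Qed.

Hypothesis Halpha : alpha <> 0.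

Lemma P1_of_revenue_hi_critical (x : R) :
  revenue_hi_deriv x = 0 -> P1 alpha Nm Nf R0 B IS x.
Proof.
  unfold revenue_hi_deriv, P1; intros Hd.
  replace (1 / alpha - 2) with (1 / alpha - 1 - 1) by ring.
  replace (Nf * Rpower x (1 / alpha - 1) + Nm) with (Nm + Rpower x (1 / alpha - 1) * Nf)
    by ring.
  replace (1 - alpha) with (alpha * (1 / alpha - 1)) at 1 by (field; exact Halpha).
  lra.
Qed.

End Revenue.

Theorem theorem4 (alpha Nm Nf R0 B IS : R)
  (Halpha0 : 0 < alpha) (Halpha1 : alpha < 1)
  (HNm : 0 < Nm) (HNf : 0 < Nf) (HR0 : 0 < R0) (HB : 0 < B) (HIS : 0 < IS)
  (lam : R) :
  is_maximizer (S_rev alpha Nm Nf R0 B IS) lam ->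
  lam = 0 \/ (1 < lam /\ P1 alpha Nm Nf R0 B IS lam).
Proof.
  intros [Hlam0 Hmax].
  destruct (Rle_dec lam 0) as [Hle0 | Hgt0]; [left; lra | right].
  assert (Hgt1 : 1 < lam).
  { destruct (Rle_dec lam 1) as [Hle1 | Hgt1]; [|lra].
    pose proof (S_rev_lt_S_rev0 alpha Nm Nf R0 B IS HIS lam (conj (Rnot_le_lt _ _ Hgt0) Hle1)).
    pose proof (Hmax 0 (Rle_refl 0)); lra. }
  split; [exact Hgt1 |].
  apply P1_of_revenue_hi_critical; [lra |].
  apply (derivable_pt_lim_local_max (revenue_hi alpha Nm Nf R0 B IS) 1 (lam + 1) lam);
    [lra | | apply derivable_pt_lim_revenue_hi; lra].
  intros y Hy; rewrite <- !S_rev_gt1 by lra; apply Hmax; lra.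
Qed.
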